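(* Let $T\subset\mathbb{R}^3$ be a non-degenerate tetrahedron, let $\mathcal{Y}^0(T)=[\mathcal{N}_{I}^0(T)]^3\oplus[\widetilde{\mathit{P}}^1(T)\otimes\mathbb{1}]$ (a space of dimension $21$), and let $E=\mathit{U}^2(T)\setminus\mathit{P}^1(T)$ be the span of the six quadratic edge base functions. Then the sum $\mathcal{Y}^0(T)+\operatorname{dev}\mathrm{D}[E]^3$ is linearly dependent, i.e. $\dim\mathcal{Y}^0(T)+\dim\operatorname{dev}\mathrm{D}[E]^3>\dim\big(\mathcal{Y}^0(T)+\operatorname{dev}\mathrm{D}[E]^3\big)$.
   Context: $\mathit{P}^p(T)$ denotes polynomials of total degree at most $p$ on $T$, $\widetilde{\mathit{P}}^p(T)$ homogeneous polynomials of degree $p$, $\mathbb{1}$ the $3\times3$ identity matrix, and $\widetilde{\mathit{P}}^1(T)\otimes\mathbb{1}=\{q\mathbb{1}:q\in\widetilde{\mathit{P}}^1(T)\}$. The lowest order Nédélec space is $\mathcal{N}_{I}^0(T)=\operatorname{span}\{\mathbf{e}_1,\mathbf{e}_2,\mathbf{e}_3,(0,z,-y)^T,(-z,0,x)^T,(y,-x,0)^T\}$ and $[\mathcal{N}_{I}^0(T)]^3$ denotes the $3\times3$ matrix fields whose rows all lie in $\mathcal{N}_{I}^0(T)$. The quadratic $H^1$-conforming polytopal space $\mathit{U}^2(T)=\mathit{P}^2(T)$ is given by the four vertex functions (the barycentric coordinates $\lambda_1,\dots,\lambda_4$, spanning $\mathit{P}^1(T)$) and one quadratic edge function per edge (e.g.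 $\lambda_i\lambda_j$ for the edge between vertices $i<j$), each vanishing on all other edges; $E=\mathit{U}^2(T)\setminus\mathit{P}^1(T)$ is the span of these six edge functions, so $\mathit{P}^2(T)=\mathit{P}^1(T)\oplus E$. For a vector field $\mathbf{v}$, $\mathrm{D}\mathbf{v}=\mathbf{v}\otimes\nabla$ is its Jacobian matrix, $\operatorname{dev}\mathbf{P}=\mathbf{P}-\frac13(\operatorname{tr}\mathbf{P})\mathbb{1}$, and $\operatorname{dev}\mathrm{D}[E]^3=\{\operatorname{dev}\mathrm{D}\mathbf{v}:\mathbf{v}\in E^3\}$. *)

From HB Require Import structures.
From mathcomp Require Import all_boot all_order all_algebra.
Set Implicit Arguments. Unset Strict Implicit. Unset Printing Implicit Defensive.
Import Order.TTheory GRing.Theory Num.Theory.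
Local Open Scope ring_scope.

(* Affine (degree <= 1) fields on R^3.  Points are x : 'rV[R]_3 with        *)
(* coordinates x = (x_0, x_1, x_2) = (x, y, z).                              *)
(* An affine field with values in a vectType W is encoded by its 4           *)
(* coefficients: A ord0 is the constant part, A (lift ord0 k) the            *)
(* coefficient of x_k.  The encoding is injective (see amf_eval below), so  *)
(* dimensions of spans of encodings are dimensions of the function spaces.  *)
Section Fields.
Variable R : realFieldType.

Definition amf := {ffun 'I_4 -> 'M[R]_3}.

Definition mk_amf (C0 : 'M[R]_3) (C : 'I_3 -> 'M[R]_3) : amf :=
  [ffun i : 'I_4 => if unlift ord0 i is Some k then C k else C0].

Definition amf_eval (A : amf) (x : 'rV[R]_3) : 'M[R]_3 :=
  A ord0 + \sum_(k < 3) x 0 k *: A (lift ord0 k).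

Definition rowmx_at (m : 'I_3) (r : 'rV[R]_3) : 'M[R]_3 :=
  \matrix_(i, j) (if i == m then r 0 j else 0).

Definition row_field (m : 'I_3) (c0 : 'rV[R]_3) (c : 'I_3 -> 'rV[R]_3) : amf :=
  mk_amf (rowmx_at m c0) (fun k => rowmx_at m (c k)).

Definition e3 (j : 'I_3) : 'rV[R]_3 := delta_mx 0 j.

(* Basis of the lowest-order Nedelec space N_I^0 as affine vector fields
   (constant part, coefficient of x_k):
   b0 = e1, b1 = e2, b2 = e3, b3 = (0,z,-y), b4 = (-z,0,x), b5 = (y,-x,0). *)
Definition i0 : 'I_3 := ord0.
Definition i1 : 'I_3 := lift ord0 ord0.
Definition i2 : 'I_3 := ord_max.

Definition ned_const (b : 'I_6) : 'rV[R]_3 :=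
  if (b < 3)%N then e3 (inord b) else 0.

Definition ned_coef (b : 'I_6) (k : 'I_3) : 'rV[R]_3 :=
  let bk (p q : nat) := (nat_of_ord b == p) && (nat_of_ord k == q) in
  if bk 3 1 then - e3 i2
  else if bk 3 2 then e3 i1
  else if bk 4 0 then e3 i2
  else if bk 4 2 then - e3 i0
  else if bk 5 0 then - e3 i1
  else if bk 5 1 then e3 i0
  else 0.

(* Y^0(T) = [N_I^0]^3 (+) [P~^1 (x) 1]:
   spanned by the fields with row m equal to a Nedelec basis field and
   all other rows zero, and by the fields x_k * 1 (k = 0,1,2). *)
Definition Ygens : seq amf :=
  [seq row_field p.1 (ned_const p.2) (ned_coef p.2) | p <- enum {: 'I_3 * 'I_6}]
  ++ [seq mk_amf 0 (fun l => if l == k then 1%:M else 0) | k <- enum 'I_3].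

Definition Y0 : {vspace amf} := <<Ygens>>%VS.

Definition dev (P : 'M[R]_3) : 'M[R]_3 := P - (\tr P / 3%:R) *: 1%:M.
Definition dev_amf (A : amf) : amf := [ffun i => dev (A i)].

Definition tet_nondegenerate (v : 'I_4 -> 'rV[R]_3) : Prop :=
  row_free (\matrix_(j < 3, k < 3) (v (lift ord0 j) - v ord0) 0 k).

(* M has rows (1, v_j); lambda_i(x) = ((1,x) *m invmx M) 0 i, i.e. the
   barycentric coordinates (the unique affine functions with
   lambda_i (v_j) = delta_ij when T is non-degenerate). *)
Definition vertmx (v : 'I_4 -> 'rV[R]_3) : 'M[R]_4 :=
  \matrix_(j, k) (if unlift ord0 k is Some k' then v j 0 k' else 1).

Definition bary_a (v : 'I_4 -> 'rV[R]_3) (i : 'I_4) : R := invmx (vertmx v) ord0 i.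
Definition bary_g (v : 'I_4 -> 'rV[R]_3) (i : 'I_4) : 'rV[R]_3 :=
  \row_k invmx (vertmx v) (lift ord0 k) i.

Definition bary (v : 'I_4 -> 'rV[R]_3) (i : 'I_4) (x : 'rV[R]_3) : R :=
  bary_a v i + \sum_(k < 3) x 0 k * bary_g v i 0 k.

(* D (lambda_i lambda_j e_m) = e_m (x) grad(lambda_i lambda_j), where
   grad(lambda_i lambda_j)(x) = lambda_i(x) g_j + lambda_j(x) g_i
     = (a_i g_j + a_j g_i) + sum_k x_k ((g_i)_k g_j + (g_j)_k g_i). *)
Definition DedgeE (v : 'I_4 -> 'rV[R]_3) (i j : 'I_4) (m : 'I_3) : amf :=
  row_field m (bary_a v i *: bary_g v j + bary_a v j *: bary_g v i)
    (fun k => bary_g v i 0 k *: bary_g v j + bary_g v j 0 k *: bary_g v i).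

(* dev D[E]^3, E = span of the six edge functions lambda_i lambda_j, i < j *)
Definition devDEgens (v : 'I_4 -> 'rV[R]_3) : seq amf :=
  [seq dev_amf (DedgeE v p.1.1 p.1.2 p.2)
  | p : ('I_4 * 'I_4) * 'I_3 <- enum {: ('I_4 * 'I_4) * 'I_3}
  & (nat_of_ord p.1.1 < nat_of_ord p.1.2)%N].

Definition devDE (v : 'I_4 -> 'rV[R]_3) : {vspace amf} := <<devDEgens v>>%VS.

End Fields.

(* The witness is dev D u for the quadratic vector field
   u = x_0 x - I_1(x_0 x), where I_1 is affine interpolation at the vertices.
   For affine p and q,
     p q - I_1(p q) = - sum_(i<j) (p_i - p_j) (q_i - q_j) lambda_i lambda_j,
   so u lies in E^3 and dev D u lies in dev D[E]^3.  On the other hand D u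
   differs from D(x_0 x) = x (x) e_0 + x_0 1 by a constant matrix, and
     dev D(x_0 x) = x (x) e_0 - (x_0 / 3) 1
   is the sum of the Nedelec rows (y, -x, 0) and (z, 0, -x) in rows 1 and 2
   and of (2/3) x_0 1, so dev D u also lies in Y^0.  It is nonzero since the
   x_1-coefficient of its entry (1, 0) is 1. *)
From HB Require Import structures.
From mathcomp Require Import all_boot all_order all_algebra ring.
Import Order.TTheory GRing.Theory Num.Theory.
Local Open Scope ring_scope.

Lemma dimv_add_ltn (K : fieldType) (vT : vectType K) (U V : {vspace vT}) (w : vT) :
  w \in U -> w \in V -> w != 0 -> (\dim (U + V) < \dim U + \dim V)%N.
Proof.
move=> wU wV nz_w; have [le_dim eq_dim] := dimv_add_leqif U V.
rewrite ltn_neqAle le_dim andbT eq_dim subv0; apply: contra nz_w => /eqP capUV0.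
by rewrite -memv0 -capUV0 memv_cap wU.
Qed.

Lemma sumr_ltn_pairs (V : nmodType) n (F : 'I_n -> 'I_n -> V) :
  (forall i, F i i = 0) ->
  \sum_(i < n) \sum_(j < n | (i < j)%N) (F i j + F j i)
    = \sum_(i < n) \sum_(j < n) F i j.
Proof.
move=> F_diag0; rewrite pair_big_dep pair_big big_split /=.
rewrite [RHS](bigID (fun p : 'I_n * 'I_n => (p.1 < p.2)%N)) /=; congr (_ + _).
rewrite [RHS](bigID (fun p : 'I_n * 'I_n => (p.2 < p.1)%N)) /=.
rewrite [X in _ + X]big1 ?addr0; last first.
  move=> [i j] /= /andP[]; rewrite -!leqNgt => le_ji le_ij.
  by rewrite (@ord_inj _ i j) ?F_diag0 //; apply/eqP; rewrite eqn_leq le_ij.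
rewrite (reindex_inj (inv_inj swap_pairK)) /=.
by apply: eq_bigl => [[i j]] /=; rewrite -leqNgt andb_idl // => /ltnW.
Qed.

Lemma sum_sqr_diff_expand (K : comRingType) (I : finType) (p q g h : I -> K) :
  \sum_i \sum_j (p i - p j) * (q i - q j) * (g i * h j)
    = (\sum_i p i * q i * g i) * (\sum_j h j)
    + (\sum_i g i) * (\sum_j p j * q j * h j)
    - (\sum_i p i * g i) * (\sum_j q j * h j)
    - (\sum_i q i * g i) * (\sum_j p j * h j).
Proof.
rewrite !big_distrlr -big_split -!sumrB; apply: eq_bigr => i _.
rewrite -big_split -!sumrB; apply: eq_bigr => j _.
by rewrite /=; ring.
Qed.

Section AffineFields.
Variable R : realFieldType.

Lemma mk_amf_ord0 (C0 : 'M[R]_3) C : mk_amf C0 C ord0 = C0.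
Proof. by rewrite ffunE unlift_none. Qed.

Lemma mk_amf_lift (C0 : 'M[R]_3) C k : mk_amf C0 C (lift ord0 k) = C k.
Proof. by rewrite ffunE liftK. Qed.

Lemma eq_mk_amf (C0 D0 : 'M[R]_3) C D :
  C0 = D0 -> C =1 D -> mk_amf C0 C = mk_amf D0 D.
Proof. by move=> -> eqCD; apply/ffunP => x; rewrite !ffunE; case: unlift. Qed.

Lemma rowmx_atE m (r : 'rV[R]_3) i j : rowmx_at m r i j = (i == m)%:R * r 0 j.
Proof. by rewrite mxE; case: (i == m); rewrite ?mul1r ?mul0r. Qed.

Lemma rowmx_at0 m : rowmx_at m 0 = 0 :> 'M[R]_3.
Proof. by apply/matrixP => i j; rewrite !mxE; case: (i == m). Qed.

Lemma dev_is_linear : linear (@dev R).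
Proof.
move=> a P Q; rewrite /dev mxtraceD mxtraceZ mulrDl scalerDl -mulrA -scalerA.
by rewrite scalerBr opprD addrACA.
Qed.

HB.instance Definition _ :=
  GRing.isLinear.Build R 'M[R]_3 'M[R]_3 _ (@dev R) dev_is_linear.

Lemma dev_amf_is_linear : linear (@dev_amf R).
Proof. by move=> a A B; apply/ffunP => i; rewrite !ffunE linearP. Qed.

HB.instance Definition _ :=
  GRing.isLinear.Build R (amf R) (amf R) _ (@dev_amf R) dev_amf_is_linear.

Lemma row_field_ned_in_Y0 m b : row_field m (ned_const R b) (ned_coef R b) \in Y0 R.
Proof.
apply/memv_span; rewrite mem_cat; apply/orP; left.
by apply: (map_f (fun p : 'I_3 * 'I_6 => row_field p.1 _ _) (x := (m, b))); rewrite mem_enum.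
Qed.

Lemma coord_id_in_Y0 k : mk_amf 0 (fun l => if l == k then 1%:M else 0) \in Y0 R.
Proof.
apply/memv_span; rewrite mem_cat; apply/orP; right.
by apply: (map_f (fun k : 'I_3 => mk_amf _ _)); rewrite mem_enum.
Qed.

Lemma const_in_Y0 (C : 'M[R]_3) : mk_amf C (fun _ => 0) \in Y0 R.
Proof.
pose b (j : 'I_3) : 'I_6 := widen_ord (isT : (3 <= 6)%N) j.
have ned_lt3 m j : row_field m (ned_const R (b j)) (ned_coef R (b j))
                   = mk_amf (delta_mx m j) (fun _ => 0).
  apply: eq_mk_amf => [|k].
    rewrite /ned_const /= ltn_ord inord_val; apply/matrixP => r l.
    by rewrite !mxE; case: (r == m).
  rewrite -[RHS](rowmx_at0 m); congr rowmx_at.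
  by case: j => [[|[|[|]]] ?]; case: k => [[|[|[|]]] ?].
have -> : mk_amf C (fun _ => 0)
          = \sum_m \sum_j C m j *: mk_amf (delta_mx m j) (fun _ => 0).
  apply/ffunP => x; rewrite sum_ffunE; under eq_bigr do rewrite sum_ffunE.
  case: (unliftP ord0 x) => [k|] ->.
    under eq_bigr do under eq_bigr do rewrite ffunE mk_amf_lift scaler0.
    by rewrite mk_amf_lift !big1.
  under eq_bigr do under eq_bigr do rewrite ffunE mk_amf_ord0.
  by rewrite mk_amf_ord0 [LHS]matrix_sum_delta.
apply: memv_suml => m _; apply: memv_suml => j _; rewrite -ned_lt3.
exact/memvZ/row_field_ned_in_Y0.
Qed.

Lemma dev_const_in_Y0 (C : 'M[R]_3) : dev_amf (mk_amf C (fun _ => 0)) \in Y0 R.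
Proof.
have -> : dev_amf (mk_amf C (fun _ => 0)) = mk_amf (dev C) (fun _ => 0).
  by apply/ffunP => x; rewrite !ffunE; case: unlift; rewrite ?linear0.
exact: const_in_Y0.
Qed.

(* D(x_0 x) = x (x) e_0 + x_0 1 *)
Definition Dx0x : amf R := mk_amf 0 (fun k => (k == i0)%:R *: 1%:M + delta_mx k i0).

Lemma dev_Dx0x :
  dev_amf Dx0x = row_field i1 (ned_const R (inord 5)) (ned_coef R (inord 5))
    - row_field i2 (ned_const R (inord 4)) (ned_coef R (inord 4))
    + (2 / 3 : R) *: mk_amf 0 (fun l => if l == i0 then 1%:M else 0).
Proof.
apply/ffunP => x; rewrite !ffunE; case: (unliftP ord0 x) => [k|] _.
  apply/matrixP => r l.
  rewrite /dev /mxtrace !mxE !big_ord_recl big_ord0 !mxE /= /ned_coef !inordK //.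
  case: k => [[|[|[|?]]] ?] //; case: r => [[|[|[|?]]] ?] //;
    case: l => [[|[|[|?]]] ?] //; by rewrite !mxE /=; field.
by rewrite /ned_const !inordK //= !rowmx_at0 linear0 scaler0 subr0 addr0.
Qed.

Lemma dev_Dx0x_in_Y0 : dev_amf Dx0x \in Y0 R.
Proof.
rewrite dev_Dx0x; apply: memvD; last exact/memvZ/coord_id_in_Y0.
by apply: memvB; apply: row_field_ned_in_Y0.
Qed.

End AffineFields.

Section Tetrahedron.
Variables (R : realFieldType) (v : 'I_4 -> 'rV[R]_3).
Hypothesis v_nondeg : tet_nondegenerate v.

Lemma vertmx_unit : vertmx v \in unitmx.
Proof.
rewrite -row_free_unit; apply: inj_row_free => u uV0.
have col0 c : \sum_j u 0 j * vertmx v j c = 0.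
  by have := congr1 (fun M : 'rV_4 => M 0 c) uV0; rewrite !mxE.
have sum_u : \sum_j u 0 j = 0.
  by rewrite -[RHS](col0 ord0); apply: eq_bigr => j _; rewrite mxE unlift_none mulr1.
have sum_uv k : \sum_j u 0 j * v j 0 k = 0.
  by rewrite -[RHS](col0 (lift ord0 k)); apply: eq_bigr => j _; rewrite mxE liftK.
have u_lift0 : \row_j u 0 (lift ord0 j) = 0 :> 'rV_3.
  apply: (row_free_inj v_nondeg); rewrite mul0mx; apply/rowP => k; rewrite !mxE.
  under eq_bigr do rewrite !mxE mulrBr.
  move: (sum_u) (sum_uv k); rewrite big_ord_recl => /addr0_eq su.
  rewrite big_ord_recl => /addr0_eq suv.
  by rewrite sumrB -mulr_suml -su -suv; ring.
have u_lift j : u 0 (lift ord0 j) = 0.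
  by have := congr1 (fun M : 'rV_3 => M 0 j) u_lift0; rewrite !mxE.
apply/rowP => j; rewrite mxE; case: (unliftP ord0 j) => [j'|] -> //.
by move: sum_u; rewrite big_ord_recl big1 ?addr0.
Qed.

Lemma mulVmx_vertmx_entry (a c : 'I_4) :
  \sum_i invmx (vertmx v) a i * vertmx v i c = (a == c)%:R.
Proof.
by have := congr1 (fun M : 'M_4 => M a c) (mulVmx vertmx_unit); rewrite !mxE.
Qed.

Lemma bary_g_sum k : \sum_i bary_g v i 0 k = 0.
Proof.
rewrite -[RHS](mulVmx_vertmx_entry (lift ord0 k) ord0).
by apply: eq_bigr => i _; rewrite !mxE unlift_none mulr1.
Qed.

Lemma bary_g_moment k l : \sum_i v i 0 l * bary_g v i 0 k = (k == l)%:R.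
Proof.
rewrite -(inj_eq (@lift_inj _ ord0)) -mulVmx_vertmx_entry.
by apply: eq_bigr => i _; rewrite !mxE liftK mulrC.
Qed.

Lemma DedgeE_lift_entry i j m k r l :
  DedgeE v i j m (lift ord0 k) r l
    = (r == m)%:R * (bary_g v i 0 k * bary_g v j 0 l + bary_g v j 0 k * bary_g v i 0 l).
Proof. by rewrite mk_amf_lift rowmx_atE !mxE. Qed.

Definition edge_coef (m : 'I_3) (i j : 'I_4) : R :=
  - ((v i 0 i0 - v j 0 i0) * (v i 0 m - v j 0 m)).

(* D u for u_m = x_0 x_m - I_1(x_0 x_m) = sum_(i<j) edge_coef m i j lambda_i lambda_j *)
Definition Dedge_x0x : amf R :=
  \sum_(m < 3) \sum_(i < 4) \sum_(j < 4 | (i < j)%N) edge_coef m i j *: DedgeE v i j m.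

Lemma Dedge_x0x_lift (k : 'I_3) :
  Dedge_x0x (lift ord0 k) = (k == i0)%:R *: 1%:M + delta_mx k i0.
Proof.
apply/matrixP => r l; rewrite /Dedge_x0x sum_ffunE summxE.
under eq_bigr do rewrite sum_ffunE summxE.
under eq_bigr do under eq_bigr do rewrite sum_ffunE summxE.
under eq_bigr do under eq_bigr do under eq_bigr do rewrite ffunE mxE DedgeE_lift_entry.
rewrite (bigD1 r) //= [X in _ + X]big1 ?addr0; last first.
  move=> m /negbTE neq_mr.
  by rewrite big1 // => i _; rewrite big1 // => j _; rewrite eq_sym neq_mr mul0r mulr0.
under eq_bigr do under eq_bigr do rewrite eqxx mul1r.
pose F i j := edge_coef r i j * (bary_g v i 0 k * bary_g v j 0 l).
transitivity (\sum_(i < 4) \sum_(j < 4 | (i < j)%N) (F i j + F j i)).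
  by apply: eq_bigr => i _; apply: eq_bigr => j _; rewrite /F /edge_coef; ring.
rewrite sumr_ltn_pairs => [|i]; last by rewrite /F /edge_coef !subrr !mul0r oppr0 mul0r.
under eq_bigr do under eq_bigr do rewrite /F /edge_coef mulNr.
under eq_bigr do rewrite sumrN.
rewrite sumrN sum_sqr_diff_expand !bary_g_sum // !bary_g_moment // !mxE.
rewrite mulr0 mul0r add0r sub0r opprB opprK (eq_sym l r) (eq_sym k r) -mulnb natrM.
by rewrite addrC.
Qed.

Lemma Dedge_x0x_split : Dedge_x0x = mk_amf (Dedge_x0x ord0) (fun _ => 0) + Dx0x R.
Proof.
apply/ffunP => x; rewrite ffunE; case: (unliftP ord0 x) => [k|] ->.
  by rewrite !mk_amf_lift Dedge_x0x_lift add0r.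
by rewrite !mk_amf_ord0 addr0.
Qed.

Lemma dev_Dedge_x0x_in_Y0 : dev_amf Dedge_x0x \in Y0 R.
Proof.
rewrite Dedge_x0x_split linearD; apply: memvD; last exact: dev_Dx0x_in_Y0.
exact: dev_const_in_Y0.
Qed.

Lemma dev_Dedge_x0x_in_devDE : dev_amf Dedge_x0x \in devDE v.
Proof.
rewrite linear_sum; apply: memv_suml => m _; rewrite linear_sum.
apply: memv_suml => i _; rewrite linear_sum; apply: memv_suml => j lt_ij.
rewrite linearZ; apply/memvZ/memv_span/mapP; exists ((i, j), m) => //.
by rewrite mem_filter mem_enum andbT.
Qed.

Lemma dev_Dedge_x0x_neq0 : dev_amf Dedge_x0x != 0.
Proof.
apply/eqP => /(congr1 (fun A : amf R => A (lift ord0 i1) i1 i0)).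
rewrite !ffunE Dedge_x0x_lift /dev !mxE /= !mulr0 subr0 add0r.
by move/eqP; rewrite oner_eq0.
Qed.

End Tetrahedron.

Theorem mainTheorem2 (R : realFieldType) (v : 'I_4 -> 'rV[R]_3) :
  tet_nondegenerate v ->
  (\dim (Y0 R + devDE v)%VS < \dim (Y0 R) + \dim (devDE v))%N.
Proof.
move=> v_nondeg; apply: (@dimv_add_ltn _ _ _ _ (dev_amf (Dedge_x0x R v))).
- exact: dev_Dedge_x0x_in_Y0.
- exact: dev_Dedge_x0x_in_devDE.
- exact: dev_Dedge_x0x_neq0.
Qed.
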